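(* Two quadrilaterals $Q_1,Q_2$ in $K^2$ have the same bisectors (the same bisecting lines, each with the same midpoint) if and only if they have the same bisector fields.
   Context: $K$ is a field of characteristic $\neq 2$. Every line $L$ in $K^2$ has an equation $tX-uY+v=0$ normalized so that $t=1$ if $u=0$ and $u=1$ if $u\neq 0$; coefficients denoted $t_L,u_L,v_L$. A quadrilateral $Q=ABA'B'$ consists of four distinct lines $A,B,A',B'$ (sides), not all through one point, with adjacent sides ($A,B$; $B,A'$; $A',B'$; $B',A$) not parallel; opposite sides may be parallel. Vertices: $A\cap B$, $B\cap A'$, $A'\cap B'$, $B'\cap A$ (two may coincide if three sides are concurrent). The centroid is the average of the four vertices. Let $\alpha=t_Au_Bu_{A'}u_{B'}-u_At_Bu_{A'}u_{B'}+u_Au_Bt_{A'}u_{B'}-u_Au_Bu_{A'}t_{B'}$, $\beta=t_Au_Bt_{A'}u_{B'}-u_At_Bu_{A'}t_{B'}$, $\gamma=t_At_Bt_{A'}u_{B'}-t_At_Bu_{A'}t_{B'}+t_Au_Bt_{A'}t_{B'}-u_At_Bt_{A'}t_{B'}$, and $\langle \mathbf v,\mathbf w\rangle_Q=\mathbf v^T\begin{pmatrix}\gamma&-\beta\\-\beta&\alpha\end{pmatrix}\mathbf w$. Lines $\ell_1,\ell_2$ are $Q$-orthogonal if $\langle (u_{\ell_1},t_{\ell_1}),(u_{\ell_2},t_{\ell_2})\rangle_Q=0$. A line $\ell$ crosses a pair $\{\ell_1,\ell_2\}$ if distinct from both and not parallel to both; $\mathrm{mid}_{\{\ell_1,\ell_2\}}(\ell)$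 is the midpoint of the points where $\ell$ meets $\ell_1,\ell_2$ (the point at infinity of $\ell$ if one is at infinity). $\ell$ bisects $Q$ (is a bisector) if $\mathrm{mid}_{\mathsf P}(\ell)$ is the same for all pairs $\mathsf P$ among $\{A,A'\},\{B,B'\}$ that $\ell$ crosses; this common point is the midpoint of the bisector. A pair $\{\ell_1,\ell_2\}$ of bisectors (possibly $\ell_1=\ell_2$) is a $Q$-pair if the midpoint of their midpoints is the centroid of $Q$ and $\ell_1,\ell_2$ are $Q$-orthogonal. The bisector field of $Q$ is the collection of all $Q$-pairs of bisectors of $Q$. *)

From HB Require Import structures.
From mathcomp Require Import all_boot all_order all_algebra.
From mathcomp Require Import ring.
Set Implicit Arguments. Unset Strict Implicit. Unset Printing Implicit Defensive.
Import Order.TTheory GRing.Theory Num.Theory.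
Local Open Scope ring_scope.

Section Quadrilaterals.
Variable K : fieldType.

Definition point := (K * K)%type.

(* A line with normalized equation  t X - u Y + v = 0,
   where u = 1, or (u = 0 and t = 1).  Normalization makes the coefficients
   (and hence Leibniz equality of records) determined by the line as a set. *)
Record line := Line {
  lt : K; lu : K; lv : K;
  lnorm : (lu == 1) || ((lu == 0) && (lt == 1)) }.

Definition on_line (L : line) (p : point) : Prop :=
  lt L * p.1 - lu L * p.2 + lv L = 0.

Definition parallel (L1 L2 : line) : bool :=
  (lt L1 == lt L2) && (lu L1 == lu L2).

(* Intersection point of two non-parallel lines (Cramer's rule). *)
Definition meet (L1 L2 : line) : point :=
  let D := lu L1 * lt L2 - lt L1 * lu L2 in
  ((lv L1 * lu L2 - lu L1 * lv L2) / D, (lt L2 * lv L1 - lt L1 * lv L2) / D).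

Definition midpt (p q : point) : point :=
  ((p.1 + q.1) / 2%:R, (p.2 + q.2) / 2%:R).

Record quad := Quad { qA : line; qB : line; qA' : line; qB' : line }.

Definition is_quad (Q : quad) : Prop :=
  [/\ (qA Q <> qB Q /\ qA Q <> qA' Q /\ qA Q <> qB' Q /\ qB Q <> qA' Q /\
          qB Q <> qB' Q /\ qA' Q <> qB' Q),
      ~ (exists p, [/\ on_line (qA Q) p, on_line (qB Q) p,
                       on_line (qA' Q) p & on_line (qB' Q) p]),
      ~~ parallel (qA Q) (qB Q) /\ ~~ parallel (qB Q) (qA' Q),
      ~~ parallel (qA' Q) (qB' Q) & ~~ parallel (qB' Q) (qA Q)].

Definition centroid (Q : quad) : point :=
  let P1 := meet (qA Q) (qB Q) in
  let P2 := meet (qB Q) (qA' Q) in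
  let P3 := meet (qA' Q) (qB' Q) in
  let P4 := meet (qB' Q) (qA Q) in
  ((P1.1 + P2.1 + P3.1 + P4.1) / 4%:R, (P1.2 + P2.2 + P3.2 + P4.2) / 4%:R).

Definition alpha (Q : quad) : K :=
  let: Quad A B A' B' := Q in
  lt A * lu B * lu A' * lu B' - lu A * lt B * lu A' * lu B'
  + lu A * lu B * lt A' * lu B' - lu A * lu B * lu A' * lt B'.
Definition beta (Q : quad) : K :=
  let: Quad A B A' B' := Q in
  lt A * lu B * lt A' * lu B' - lu A * lt B * lu A' * lt B'.
Definition gamma (Q : quad) : K :=
  let: Quad A B A' B' := Q in
  lt A * lt B * lt A' * lu B' - lt A * lt B * lu A' * lt B'
  + lt A * lu B * lt A' * lt B' - lu A * lt B * lt A' * lt B'.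

Definition qform (Q : quad) (v w : K * K) : K :=
  v.1 * (gamma Q * w.1 - beta Q * w.2) + v.2 * (- beta Q * w.1 + alpha Q * w.2).

Definition Q_orthogonal (Q : quad) (l1 l2 : line) : Prop :=
  qform Q (lu l1, lt l1) (lu l2, lt l2) = 0.

Definition crosses (l l1 l2 : line) : Prop :=
  [/\ l <> l1, l <> l2 & ~ (parallel l l1 && parallel l l2)].

(* mid_{l1,l2}(l): [None] stands for the point at infinity of l. *)
Definition mid (l1 l2 l : line) : option point :=
  if parallel l l1 || parallel l l2 then None
  else Some (midpt (meet l l1) (meet l l2)).

Definition bisects_with_mid (Q : quad) (l : line) (m : option point) : Prop :=
  [/\ crosses l (qA Q) (qA' Q) \/ crosses l (qB Q) (qB' Q),
      crosses l (qA Q) (qA' Q) -> mid (qA Q) (qA' Q) l = m &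
      crosses l (qB Q) (qB' Q) -> mid (qB Q) (qB' Q) l = m].

Definition bisector (Q : quad) (l : line) : Prop :=
  exists m, bisects_with_mid Q l m.

(* {l1,l2} is a Q-pair (midpoints must be affine points for the
   midpoint of the midpoints to be the centroid). *)
Definition Q_pair (Q : quad) (l1 l2 : line) : Prop :=
  exists m1 m2 : point,
    [/\ bisects_with_mid Q l1 (Some m1), bisects_with_mid Q l2 (Some m2),
        midpt m1 m2 = centroid Q & Q_orthogonal Q l1 l2].

Definition bisector_field (Q : quad) : line -> line -> Prop := Q_pair Q.

Lemma meet_on_lines (L1 L2 : line) :
  ~~ parallel L1 L2 -> on_line L1 (meet L1 L2) /\ on_line L2 (meet L1 L2).
Proof.
case: L1 L2 => [t1 u1 v1 n1] [t2 u2 v2 n2] /=; rewrite /parallel /on_line /meet /=.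
move=> hp.
have hD : u1 * t2 - t1 * u2 != 0.
  move: n1 n2 hp; case/orP=> [/eqP-> | /andP[/eqP-> /eqP->]];
  case/orP=> [/eqP-> | /andP[/eqP-> /eqP->]] => hp; apply/eqP => hD; move: hp.
  - have -> : t1 = t2.
      by apply/eqP; rewrite -subr_eq0 -oppr_eq0 -hD mul1r mulr1 opprB.
    by rewrite !eqxx.
  - by move: hD; rewrite mul1r mulr0 subr0 => /eqP; rewrite oner_eq0.
  - by move: hD; rewrite mul0r mulr1 sub0r => /eqP; rewrite oppr_eq0 oner_eq0.
  - by rewrite !eqxx.
by split; field.
Qed.

End Quadrilaterals.

(* Write f_L for the affine equation of a line L.  The midpoint of the points where a line l
   meets L and L' is the critical point on l of the quadratic polynomial f_L f_L', so l bisects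
   Q with midpoint x iff the derivatives of f_A f_A' and f_B f_B' along l vanish at x.

   Every conic is a f_A f_A' + b f_B f_B' + r f_A f_B plus an affine polynomial.  The four
   sides are bisectors (each through the midpoint of its two vertices), and testing a conic on
   them shows that the conics whose derivative along every bisector vanishes at its midpoint
   form exactly the pencil a f_A f_A' + b f_B f_B' + k.  A pair {l1, l2} is a Q-pair iff
   f_l1 f_l2 lies in this pencil: Q-orthogonality is what kills r, and the centroid is the
   midpoint of the midpoints of the four points where l1, l2 meet a pair of opposite sides.

   Hence equal bisectors give equal pencils, so equal bisector fields.  Conversely, if the
   fields agree, the opposite side pairs of Q2 are Q1-pairs, so f_A2 f_A2' and f_B2 f_B2' lie
   in the pencil of Q1, and every bisector of Q1 bisects Q2. *)

From mathcomp Require Import all_boot all_algebra.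
From mathcomp Require Import ring.
From Stdlib Require Import Classical_Prop.
Set Implicit Arguments. Unset Strict Implicit. Unset Printing Implicit Defensive.
Import GRing.Theory.
Local Open Scope ring_scope.

Section Lines.
Variable K : fieldType.
Local Notation line := (line K).
Local Notation point := (point K).

Definition lform (L : line) (x : point) : K := lt L * x.1 - lu L * x.2 + lv L.
Definition llin (L : line) (d : K * K) : K := lt L * d.1 - lu L * d.2.
Definition ldir (L : line) : K * K := (lu L, lt L).
Definition shift (x : point) (s : K) (d : K * K) : point :=
  (x.1 + s * d.1, x.2 + s * d.2).

Lemma line_ext (L S : line) :
  lt L = lt S -> lu L = lu S -> lv L = lv S -> L = S.
Proof.
case: L S => t u v n [t' u' v' n'] /= et eu ev; subst.
by rewrite (bool_irrelevance n n').
Qed.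

Lemma line_normP (L : line) : lu L = 1 \/ lu L = 0 /\ lt L = 1.
Proof. by case: L => t u v /= /orP[/eqP-> | /andP[/eqP-> /eqP->]]; [left | right]. Qed.

Lemma llin_dir (L : line) : llin L (ldir L) = 0.
Proof. by rewrite /llin /ldir /=; ring. Qed.

Lemma llinD (L : line) d e : llin L (d + e) = llin L d + llin L e.
Proof. by rewrite /llin /=; ring. Qed.

Lemma llin_dirC (L S : line) : llin S (ldir L) = - llin L (ldir S).
Proof. by rewrite /llin /ldir /=; ring. Qed.

Lemma parallelE (L S : line) : parallel L S = (llin S (ldir L) == 0).
Proof.
rewrite /parallel /llin /ldir /=; apply/andP/eqP => [[/eqP-> /eqP->]|]; first ring.
have [->|[-> ->]] := line_normP L; have [->|[-> ->]] := line_normP S.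
- by rewrite mulr1 mul1r => /eqP; rewrite subr_eq0 => /eqP->.
- by rewrite mulr1 !mul0r subr0 => /eqP; rewrite oner_eq0.
- by rewrite mulr0 mul1r sub0r => /eqP; rewrite oppr_eq0 oner_eq0.
- by [].
Qed.

Lemma parallelNE (L S : line) : ~~ parallel L S = (llin L (ldir S) != 0).
Proof. by rewrite parallelE llin_dirC oppr_eq0. Qed.

Lemma parallel_refl (L : line) : parallel L L.
Proof. by rewrite /parallel !eqxx. Qed.

Lemma parallel_sym (L S : line) : parallel L S = parallel S L.
Proof. by rewrite /parallel eq_sym [lu L == _]eq_sym. Qed.

Lemma parallel_trans (L S T : line) :
  parallel L S -> parallel S T -> parallel L T.
Proof. by rewrite /parallel => /andP[/eqP-> /eqP->]. Qed.

Lemma parallel_ntrans (L S T : line) :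
  parallel L S -> ~~ parallel S T -> ~~ parallel L T.
Proof.
move=> pLS; apply: contra => pLT.
by apply: parallel_trans pLT; rewrite parallel_sym.
Qed.

Lemma npar_det (L S : line) : ~~ parallel L S ->
  (ldir L).1 * (ldir S).2 - (ldir L).2 * (ldir S).1 != 0.
Proof. by rewrite parallelE /llin /ldir /= mulrC [lt L * _]mulrC. Qed.

Lemma lform_shift (L : line) x s d :
  lform L (shift x s d) = lform L x + s * llin L d.
Proof. by rewrite /lform /llin /shift /=; ring. Qed.

Lemma shift0 (x : point) d : shift x 0 d = x.
Proof. by rewrite /shift !mul0r !addr0; case: x. Qed.

Lemma on_line_shift (L : line) x s : on_line L x -> on_line L (shift x s (ldir L)).
Proof. by rewrite /on_line -!/(lform _ _) lform_shift llin_dir => ->; ring. Qed.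

Lemma on_line_dir (L : line) p q : on_line L p -> on_line L q ->
  exists s, q = shift p s (ldir L).
Proof.
rewrite /on_line /shift /ldir; case: p q => [p1 p2] [q1 q2] /= hp hq.
have diff : lt L * (q1 - p1) = lu L * (q2 - p2).
  apply/eqP; rewrite -subr_eq0; apply/eqP.
  transitivity ((lt L * q1 - lu L * q2 + lv L) - (lt L * p1 - lu L * p2 + lv L)).
    by ring.
  by rewrite hp hq subrr.
have [u1|[u0 t1]] := line_normP L.
- exists (q1 - p1); rewrite u1; congr pair; first by ring.
  by move: diff; rewrite u1 mul1r => d; rewrite -[q2](subrK p2) -d; ring.
- exists (q2 - p2); rewrite t1; congr pair; last by ring.
  by move: diff; rewrite u0 t1 mul1r mul0r => /eqP; rewrite subr_eq0 => /eqP->; ring.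
Qed.

Lemma meet_uniq (L S : line) p q : ~~ parallel L S ->
  on_line L p -> on_line S p -> on_line L q -> on_line S q -> p = q.
Proof.
rewrite parallelE => nLS Lp Sp Lq Sq; have [s def_q] := on_line_dir Lp Lq.
move: Sq; rewrite def_q /on_line -!/(lform _ _) lform_shift.
rewrite [lform S p]Sp add0r => /eqP; rewrite mulf_eq0 (negPf nLS) orbF => /eqP->.
by rewrite shift0.
Qed.

Lemma meetC (L S : line) : ~~ parallel L S -> meet L S = meet S L.
Proof.
move=> nLS; have nSL : ~~ parallel S L by rewrite parallel_sym.
have [L1 S1] := meet_on_lines nLS; have [S2 L2] := meet_on_lines nSL.
exact: meet_uniq nLS L1 S1 L2 S2.
Qed.

Lemma parallel_on_line_eq (L S : line) x :
  parallel L S -> on_line L x -> on_line S x -> L = S.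
Proof.
rewrite /parallel => /andP[/eqP et /eqP eu] Lx Sx.
apply: line_ext => //; apply/eqP; rewrite -subr_eq0; apply/eqP.
transitivity (lform L x - lform S x); first by rewrite /lform et eu; ring.
by rewrite [lform L x]Lx [lform S x]Sx subrr.
Qed.

Lemma midptC (p q : point) : midpt p q = midpt q p.
Proof. by rewrite /midpt addrC [p.2 + _]addrC. Qed.

Lemma npar_crosses (l S S' : line) :
  ~~ parallel l S -> ~~ parallel l S' -> crosses l S S'.
Proof.
move=> nlS nlS'; split; [move=> elS | move=> elS' | by rewrite (negPf nlS)].
- by move: nlS; rewrite elS parallel_refl.
- by move: nlS'; rewrite elS' parallel_refl.
Qed.

Lemma crossesC (l S S' : line) : crosses l S S' -> crosses l S' S.
Proof. by case=> lS lS' nlSS'; split => //; rewrite andbC. Qed.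

Lemma mid_npar (l S S' : line) : ~~ parallel l S -> ~~ parallel l S' ->
  mid S S' l = Some (midpt (meet l S) (meet l S')).
Proof. by rewrite /mid => /negPf-> /negPf->. Qed.

Definition dot (w d : K * K) : K := w.1 * d.1 + w.2 * d.2.

Lemma dot0l d : dot 0 d = 0.
Proof. by rewrite /dot /= !mul0r addr0. Qed.

Lemma dot_dir_lin (L : line) w : dot w (ldir L) = 0 ->
  exists mu, forall d, dot w d = mu * llin L d.
Proof.
rewrite /dot /llin /ldir /=; have [->|[-> ->]] := line_normP L => w0.
- have -> : w.1 = - (w.2 * lt L) by apply/eqP; rewrite -addr_eq0 -w0 mulr1.
  by exists (- w.2) => d; ring.
- by exists w.1 => d; move: w0; rewrite mulr0 mulr1 add0r => ->; ring.
Qed.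

Lemma dot_dir_eq0 (L S : line) w : ~~ parallel L S ->
  dot w (ldir L) = 0 -> dot w (ldir S) = 0 -> w = 0.
Proof.
move=> /npar_det; rewrite /dot; move: (ldir L) (ldir S) => d e det0 wd we.
have w1 : (d.1 * e.2 - d.2 * e.1) * w.1
    = e.2 * (w.1 * d.1 + w.2 * d.2) - d.2 * (w.1 * e.1 + w.2 * e.2) by ring.
have w2 : (d.1 * e.2 - d.2 * e.1) * w.2
    = d.1 * (w.1 * e.1 + w.2 * e.2) - e.1 * (w.1 * d.1 + w.2 * d.2) by ring.
rewrite wd we !mulr0 subrr in w1 w2; clear wd we.
case: w w1 w2 => a b /= /eqP + /eqP; rewrite !mulf_eq0 (negPf det0) /= => /eqP-> /eqP->.
by [].
Qed.

Lemma quad_comb_parallel (l1 l2 X : line) (a b : K) (p q : K * K -> K) :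
  (forall d, llin l1 d * llin l2 d = a * p d + b * q d) ->
  p (ldir X) = 0 -> q (ldir X) != 0 -> parallel l1 X || parallel l2 X -> b = 0.
Proof.
move=> quadE pX0 qX plX; have : llin l1 (ldir X) * llin l2 (ldir X) = 0.
  by case/orP: plX; rewrite parallelE llin_dirC oppr_eq0 => /eqP->; rewrite ?mul0r ?mulr0.
by rewrite quadE pX0 mulr0 add0r => /eqP; rewrite mulf_eq0 (negPf qX) orbF => /eqP.
Qed.

End Lines.

Section Midpoints.
Variable K : fieldType.
Hypothesis two_neq0 : (2%:R : K) != 0.
Local Notation line := (line K).
Local Notation point := (point K).

Definition dprod (S T : line) (x : point) (d : K * K) : K :=
  lform S x * llin T d + lform T x * llin S d.

Lemma dprodC (S T : line) x d : dprod S T x d = dprod T S x d.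
Proof. by rewrite /dprod addrC. Qed.

Lemma dprod_on_line (S T : line) x : on_line S x -> dprod S T x (ldir S) = 0.
Proof. by rewrite /dprod llin_dir /on_line -/(lform _ _) => ->; ring. Qed.

Lemma dprod_shift_dir (S T l : line) x s :
  dprod S T (shift x s (ldir l)) (ldir l) =
  dprod S T x (ldir l) + 2%:R * s * (llin S (ldir l) * llin T (ldir l)).
Proof. by rewrite /dprod !lform_shift; ring. Qed.

Lemma lform_midpt (L : line) p q : lform L (midpt p q) = (lform L p + lform L q) / 2%:R.
Proof. by rewrite /lform /midpt /=; field. Qed.

Lemma dprod_midpt (S T : line) p q d :
  dprod S T (midpt p q) d = (dprod S T p d + dprod S T q d) / 2%:R.
Proof. by rewrite /dprod !lform_midpt; field. Qed.

Lemma midpt_on_line (L : line) p q :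
  on_line L p -> on_line L q -> on_line L (midpt p q).
Proof. by rewrite /on_line -!/(lform _ _) lform_midpt => -> ->; rewrite addr0 mul0r. Qed.

Lemma midpt_midpt_comm (p q r s : point) :
  midpt (midpt p q) (midpt r s) = midpt (midpt p r) (midpt q s).
Proof. by rewrite /midpt /=; congr pair; field. Qed.

Lemma dprod_mid (l S S' : line) : ~~ parallel l S -> ~~ parallel l S' ->
  let m := midpt (meet l S) (meet l S') in on_line l m /\ dprod S S' m (ldir l) = 0.
Proof.
move=> nlS nlS' /=; have [lp Sp] := meet_on_lines nlS; have [lq S'q] := meet_on_lines nlS'.
split; first exact: midpt_on_line.
move: (meet l S) (meet l S') lp Sp lq S'q => p q lp Sp lq S'q.
have [s def_q] := on_line_dir lp lq.
have S'p : lform S' p = - (s * llin S' (ldir l)).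
  by apply/eqP; rewrite -addr_eq0 -lform_shift -def_q; apply/eqP.
rewrite dprod_midpt /dprod def_q !lform_shift S'p.
by rewrite [lform S p]Sp; field.
Qed.

Lemma dprod_root_uniq (l S S' : line) x y :
  ~~ parallel l S -> ~~ parallel l S' -> on_line l x -> on_line l y ->
  dprod S S' x (ldir l) = 0 -> dprod S S' y (ldir l) = 0 -> x = y.
Proof.
rewrite !parallelE => nlS nlS' lx ly x0; have [s ->] := on_line_dir lx ly.
rewrite dprod_shift_dir x0 add0r => /eqP.
rewrite !mulf_eq0 (negPf two_neq0) (negPf nlS) (negPf nlS') /= orbF => /eqP->.
by rewrite shift0.
Qed.

Lemma dprod_root_midpt (l S S' : line) x :
  ~~ parallel l S -> ~~ parallel l S' -> on_line l x -> dprod S S' x (ldir l) = 0 ->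
  x = midpt (meet l S) (meet l S').
Proof.
move=> nlS nlS' lx x0; have [lm m0] := dprod_mid nlS nlS'.
exact: dprod_root_uniq nlS nlS' lx lm x0 m0.
Qed.

Lemma dprod_midpt_vertex (l S T : line) p q :
  on_line l p -> on_line l q -> on_line T p ->
  dprod S T (midpt p q) (ldir l) = llin T (ldir l) * lform S q.
Proof.
move=> lp lq Tp; have [s def_q] := on_line_dir lp lq.
rewrite dprod_midpt /dprod def_q !lform_shift [lform T p]Tp.
by field.
Qed.

Lemma critical_midpts_eq (l1 l2 S S' : line) mS mS' x1 x2 :
  ~~ parallel l1 S -> ~~ parallel l1 S' -> ~~ parallel l2 S -> ~~ parallel l2 S' ->
  on_line S mS -> dprod l1 l2 mS (ldir S) = 0 ->
  on_line S' mS' -> dprod l1 l2 mS' (ldir S') = 0 ->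
  on_line l1 x1 -> dprod S S' x1 (ldir l1) = 0 ->
  on_line l2 x2 -> dprod S S' x2 (ldir l2) = 0 ->
  midpt x1 x2 = midpt mS mS'.
Proof.
move=> n1 n1' n2 n2' SmS mS0 S'mS' mS'0 l1x1 x10 l2x2 x20.
rewrite (dprod_root_midpt n1 n1' l1x1 x10) (dprod_root_midpt n2 n2' l2x2 x20).
have m1 : ~~ parallel S l1 by rewrite parallel_sym.
have m2 : ~~ parallel S l2 by rewrite parallel_sym.
have m1' : ~~ parallel S' l1 by rewrite parallel_sym.
have m2' : ~~ parallel S' l2 by rewrite parallel_sym.
rewrite (dprod_root_midpt m1 m2 SmS mS0) (dprod_root_midpt m1' m2' S'mS' mS'0).
by rewrite midpt_midpt_comm (meetC n1) (meetC n1') (meetC n2) (meetC n2').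
Qed.

Lemma crosses_dprod_npar (l S S' : line) x : crosses l S S' -> on_line l x ->
  dprod S S' x (ldir l) = 0 -> ~~ parallel l S.
Proof.
case=> nlS _ nboth lx x0; apply/negP => plS; apply: nlS.
have nlS' : llin S' (ldir l) != 0.
  by rewrite -parallelE; apply: contra_notN nboth => plS'; rewrite plS.
have g0 : llin S (ldir l) = 0 by apply/eqP; rewrite -parallelE.
move: x0; rewrite /dprod g0 mulr0 addr0 => /eqP.
rewrite mulf_eq0 (negPf nlS') orbF => /eqP Sx.
exact: parallel_on_line_eq plS lx Sx.
Qed.

Lemma mid_crossesP (l S S' : line) x : crosses l S S' -> on_line l x ->
  mid S S' l = Some x <-> dprod S S' x (ldir l) = 0.
Proof.
move=> clSS' lx; split.
  by rewrite /mid; case: ifP => // /norP[nlS nlS'] [<-]; case: (dprod_mid nlS nlS').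
move=> x0; have nlS := crosses_dprod_npar clSS' lx x0.
have nlS' := crosses_dprod_npar (crossesC clSS') lx (etrans (dprodC _ _ _ _) x0).
by rewrite mid_npar // -(dprod_root_midpt nlS nlS' lx x0).
Qed.

Lemma mid_on_line (l S S' : line) x : mid S S' l = Some x -> on_line l x.
Proof.
by rewrite /mid; case: ifP => // /norP[nlS nlS'] [<-]; case: (dprod_mid nlS nlS').
Qed.

Lemma dprod_ncrosses (l S S' : line) x : ~ crosses l S S' -> on_line l x ->
  dprod S S' x (ldir l) = 0.
Proof.
move=> nclSS' lx; case: (classic (l = S)) => [<-|nlS]; first exact: dprod_on_line.
case: (classic (l = S')) => [<-|nlS']; first by rewrite dprodC dprod_on_line.
have /andP[] : parallel l S && parallel l S'.
  by apply/negP => nboth; apply: nclSS'; split.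
by rewrite !parallelE /dprod => /eqP-> /eqP->; ring.
Qed.

Lemma dprod_common_root (l S S' T T' : line) a b :
  ~~ parallel l S -> ~~ parallel l S' -> (a != 0) || (b != 0) ->
  (forall x, on_line l x -> a * dprod S S' x (ldir l) + b * dprod T T' x (ldir l) = 0) ->
  exists x, [/\ on_line l x, dprod S S' x (ldir l) = 0 & dprod T T' x (ldir l) = 0].
Proof.
move=> nlS nlS' ab comb0; have [lm m0] := dprod_mid nlS nlS'.
set m := midpt _ _ in lm m0; exists m; split=> //.
have := comb0 m lm; rewrite m0 mulr0 add0r => /eqP.
rewrite mulf_eq0 => /orP[/eqP b0|/eqP //]; move: ab; rewrite b0 eqxx orbF => a_neq0.
have := comb0 _ (on_line_shift 1 lm).
rewrite dprod_shift_dir m0 b0 mul0r addr0 add0r => /eqP.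
move: nlS nlS'; rewrite !parallelE => nlS nlS'.
by rewrite !mulf_eq0 (negPf a_neq0) (negPf two_neq0) oner_eq0 (negPf nlS) (negPf nlS').
Qed.

Lemma dprod_parallel (l1 l2 : line) x d : parallel l1 l2 ->
  dprod l1 l2 x d = (lform l1 x + lform l2 x) * llin l1 d.
Proof. by case/andP => /eqP et /eqP eu; rewrite /dprod /llin et eu; ring. Qed.

(* For parallel [l1], [l2], [dprod l1 l2] is [F := lform l1 + lform l2] times a linear form,
   and [F] vanishes at the midpoint of [m1] and [m2]. *)
Lemma parallel_pair_dot_eq0 (l1 l2 S S' : line) (mS mS' m1 m2 : point) (w : K * K) :
  parallel l1 l2 -> ~~ parallel l1 S -> ~~ parallel l1 S' ->
  on_line l1 m1 -> on_line l2 m2 -> midpt mS mS' = midpt m1 m2 ->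
  dot w (ldir l1) = 0 ->
  dprod l1 l2 mS (ldir S) = dot w (ldir S) ->
  dprod l1 l2 mS' (ldir S') = dot w (ldir S') -> w = 0.
Proof.
move=> p12 n1 n1' l1m1 l2m2 mid_eq wl1 eS eS'.
have [mu dot_mu] := dot_dir_lin wl1.
pose F x := lform l1 x + lform l2 x.
have F_midpt p q : F (midpt p q) = (F p + F q) / 2%:R by rewrite /F !lform_midpt; field.
have mu_F X mX : ~~ parallel l1 X -> dprod l1 l2 mX (ldir X) = dot w (ldir X) -> mu = F mX.
  rewrite parallelNE dot_mu (dprod_parallel _ _ p12) => nX /eqP.
  by rewrite eq_sym -subr_eq0 -mulrBl mulf_eq0 (negPf nX) orbF subr_eq0 => /eqP.
have F0 : F m1 + F m2 = 0.
  have lform2 x : lform l2 x = lform l1 x + (lv l2 - lv l1).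
    by case/andP: p12 => /eqP et /eqP eu; rewrite /lform et eu; ring.
  have l2m2' : lform l1 m2 + (lv l2 - lv l1) = 0 by rewrite -lform2.
  transitivity (2%:R * lform l1 m1 + 2%:R * (lform l1 m2 + (lv l2 - lv l1))).
    by rewrite /F !lform2; ring.
  by rewrite l2m2' [lform l1 m1]l1m1; ring.
have mu0 : mu = 0.
  have : F (midpt mS mS') = mu by rewrite F_midpt -(mu_F S) -?(mu_F S') //; field.
  by rewrite mid_eq F_midpt F0 mul0r => <-.
by apply: (dot_dir_eq0 n1); rewrite dot_mu mu0 mul0r.
Qed.

End Midpoints.

Section Quadrilateral.
Variable K : fieldType.
Hypothesis two_neq0 : (2%:R : K) != 0.
Local Notation line := (line K).
Variable Q : quad K.
Hypothesis quadQ : is_quad Q.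
Local Notation A := (qA Q).
Local Notation B := (qB Q).
Local Notation A' := (qA' Q).
Local Notation B' := (qB' Q).

Lemma quad_npar :
  [/\ ~~ parallel A B, ~~ parallel B A', ~~ parallel A' B' & ~~ parallel B' A].
Proof. by case: quadQ => _ _ [nAB nBA'] nA'B' nB'A. Qed.

Lemma quad_npar_sym :
  [/\ ~~ parallel B A, ~~ parallel A' B, ~~ parallel B' A' & ~~ parallel A B'].
Proof. by case: quad_npar => *; split; rewrite parallel_sym. Qed.

Lemma quad_opposite_npar (l : line) :
  (~~ parallel l A && ~~ parallel l A') || (~~ parallel l B && ~~ parallel l B').
Proof.
have [nAB nBA' nA'B' nB'A] := quad_npar; have [_ nA'B _ nAB'] := quad_npar_sym.
rewrite -!negb_or -negb_and; apply/negP => /andP[/orP[lA|lA'] /orP[lB|lB']].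
- by move: (parallel_ntrans lA nAB); rewrite lB.
- by move: (parallel_ntrans lA nAB'); rewrite lB'.
- by move: (parallel_ntrans lA' nA'B); rewrite lB.
- by move: (parallel_ntrans lA' nA'B'); rewrite lB'.
Qed.

Lemma bisects_None (l : line) : ~ bisects_with_mid Q l None.
Proof.
case=> _ midAA' midBB'; case/orP: (quad_opposite_npar l) => /andP[nl nl'].
- by move: (midAA' (npar_crosses nl nl')); rewrite mid_npar.
- by move: (midBB' (npar_crosses nl nl')); rewrite mid_npar.
Qed.

Lemma bisects_SomeE (l : line) x : bisects_with_mid Q l (Some x) <->
  [/\ on_line l x, dprod A A' x (ldir l) = 0 & dprod B B' x (ldir l) = 0].
Proof.
split=> [[cross midAA' midBB'] | [lx xA xB]].
  have lx : on_line l x.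
    by case: cross => c; [exact: mid_on_line (midAA' c) | exact: mid_on_line (midBB' c)].
  split=> //.
  - case: (classic (crosses l A A')) => c; last exact: dprod_ncrosses.
    exact: (mid_crossesP two_neq0 c lx).1 (midAA' c).
  - case: (classic (crosses l B B')) => c; last exact: dprod_ncrosses.
    exact: (mid_crossesP two_neq0 c lx).1 (midBB' c).
split=> [|c|c]; try exact: (mid_crossesP two_neq0 c lx).2.
by case/orP: (quad_opposite_npar l) => /andP[nl nl']; [left | right]; exact: npar_crosses.
Qed.

Definition midA := midpt (meet A B) (meet B' A).
Definition midB := midpt (meet A B) (meet B A').
Definition midA' := midpt (meet B A') (meet A' B').
Definition midB' := midpt (meet A' B') (meet B' A).

Lemma centroid_midpts : midpt midA midA' = centroid Q /\ midpt midB midB' = centroid Q.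
Proof.
have [nAB nBA' nA'B' nB'A] := quad_npar.
move: (npar_det nAB) (npar_det nBA') (npar_det nA'B') (npar_det nB'A).
rewrite /ldir /= => dAB dBA' dA'B' dB'A.
by rewrite /midA /midB /midA' /midB' /centroid /midpt /meet /=; split; congr pair; field;
  rewrite ?two_neq0 ?dAB ?dBA' ?dA'B' ?dB'A ?(natrM K 2 2) ?mulf_neq0.
Qed.

Lemma bisects_sides :
  [/\ bisects_with_mid Q A (Some midA), bisects_with_mid Q B (Some midB),
      bisects_with_mid Q A' (Some midA') & bisects_with_mid Q B' (Some midB')].
Proof.
have [nAB nBA' nA'B' nB'A] := quad_npar; have [nBA nA'B nB'A' nAB'] := quad_npar_sym.
have [AP1 BP1] := meet_on_lines nAB; have [BP2 A'P2] := meet_on_lines nBA'.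
have [A'P3 B'P3] := meet_on_lines nA'B'; have [B'P4 AP4] := meet_on_lines nB'A.
have onA := midpt_on_line two_neq0 AP1 AP4.
have onB := midpt_on_line two_neq0 BP1 BP2.
have onA' := midpt_on_line two_neq0 A'P2 A'P3.
have onB' := midpt_on_line two_neq0 B'P3 B'P4.
split; apply/bisects_SomeE; split=> //;
  try exact: dprod_on_line; try by rewrite dprodC dprod_on_line.
- by rewrite /midA (meetC nB'A); case: (dprod_mid two_neq0 nAB nAB').
- by rewrite /midB (meetC nAB); case: (dprod_mid two_neq0 nBA nBA').
- by rewrite /midA' (meetC nBA'); case: (dprod_mid two_neq0 nA'B nA'B').
- by rewrite /midB' (meetC nA'B') midptC; case: (dprod_mid two_neq0 nB'A nB'A').
Qed.

End Quadrilateral.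

Section Conics.
Variable K : fieldType.
Local Notation line := (line K).
Local Notation point := (point K).

Record conic := Conic { cxx : K; cxy : K; cyy : K; cx : K; cy : K; c0 : K }.

Lemma conic_ext (c c' : conic) :
  cxx c = cxx c' -> cxy c = cxy c' -> cyy c = cyy c' ->
  cx c = cx c' -> cy c = cy c' -> c0 c = c0 c' -> c = c'.
Proof. by case: c c' => ? ? ? ? ? ? [? ? ? ? ? ?] /= -> -> -> -> -> ->. Qed.

Definition lprod (L S : line) : conic :=
  Conic (lt L * lt S) (- (lt L * lu S + lu L * lt S)) (lu L * lu S)
        (lt L * lv S + lv L * lt S) (- (lu L * lv S + lv L * lu S)) (lv L * lv S).

Definition cderiv (c : conic) (x : point) (d : K * K) : K :=
  (2%:R * cxx c * x.1 + cxy c * x.2 + cx c) * d.1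
  + (cxy c * x.1 + 2%:R * cyy c * x.2 + cy c) * d.2.

Definition cquad (c : conic) (d : K * K) : K :=
  cxx c * d.1 ^+ 2 + cxy c * (d.1 * d.2) + cyy c * d.2 ^+ 2.

Lemma cderiv_lprod (L S : line) x d : cderiv (lprod L S) x d = dprod L S x d.
Proof. by rewrite /cderiv /dprod /lform /llin /=; ring. Qed.

Lemma cquad_lprod (L S : line) d : cquad (lprod L S) d = llin L d * llin S d.
Proof. by rewrite /cquad /llin /=; ring. Qed.

Lemma lprod_quad_neq0 (L S : line) :
  ~ [/\ cxx (lprod L S) = 0, cxy (lprod L S) = 0 & cyy (lprod L S) = 0].
Proof.
rewrite /=; have [->|[-> ->]] := line_normP L; have [->|[-> ->]] := line_normP S;
  case=> /eqP h0 /eqP h1 /eqP h2; [move: h2 | move: h1 | move: h1 | move: h0];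
  by rewrite ?(mul1r, mulr1, mul0r, mulr0, add0r, addr0, oppr_eq0, oner_eq0).
Qed.

Lemma cquad_eq (c c' : conic) (d e : K * K) : d.1 * e.2 - d.2 * e.1 != 0 ->
  cquad c d = cquad c' d -> cquad c e = cquad c' e ->
  cquad c (d + e) = cquad c' (d + e) ->
  [/\ cxx c = cxx c', cxy c = cxy c' & cyy c = cyy c'].
Proof.
move=> det_neq0 qd qe qde; pose D := d.1 * e.2 - d.2 * e.1.
have D2_neq0 : D ^+ 2 != 0 by rewrite expf_neq0.
have cancelD z : D ^+ 2 * z = 0 -> z = 0.
  by move/eqP; rewrite mulf_eq0 (negPf D2_neq0) => /eqP.
pose q v := cquad c v - cquad c' v; pose P := q (d + e) - q d - q e.
have [qd0 qe0] : q d = 0 /\ q e = 0 by rewrite /q qd qe !subrr.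
have P0 : P = 0 by rewrite /P qd0 qe0 /q qde !subrr ?subr0.
have xx : cxx c - cxx c' = 0.
  apply: cancelD; transitivity (e.2 ^+ 2 * q d - e.2 * d.2 * P + d.2 ^+ 2 * q e).
    by rewrite /P /q /cquad /D /=; ring.
  by rewrite qd0 qe0 P0; ring.
have yy : cyy c - cyy c' = 0.
  apply: cancelD; transitivity (e.1 ^+ 2 * q d - e.1 * d.1 * P + d.1 ^+ 2 * q e).
    by rewrite /P /q /cquad /D /=; ring.
  by rewrite qd0 qe0 P0; ring.
have xy : cxy c - cxy c' = 0.
  apply: cancelD; transitivity ((e.2 - e.1) ^+ 2 * q d + (e.2 - e.1) * (d.1 - d.2) * P
    + (d.1 - d.2) ^+ 2 * q e - D ^+ 2 * ((cxx c - cxx c') + (cyy c - cyy c'))).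
    by rewrite /P /q /cquad /D /=; ring.
  by rewrite qd0 qe0 P0 xx yy; ring.
by split; apply/eqP; rewrite -subr_eq0; apply/eqP.
Qed.

End Conics.

Section Pencil.
Variable K : fieldType.
Hypothesis two_neq0 : (2%:R : K) != 0.
Local Notation line := (line K).
Local Notation conic := (conic K).
Variable Q : quad K.
Local Notation A := (qA Q).
Local Notation B := (qB Q).
Local Notation A' := (qA' Q).
Local Notation B' := (qB' Q).

Definition frame_conic (a b r : K) (w : K * K) (k : K) : conic :=
  let comb (f : conic -> K) :=
    a * f (lprod A A') + b * f (lprod B B') + r * f (lprod A B) in
  Conic (comb (@cxx K)) (comb (@cxy K)) (comb (@cyy K))
        (comb (@cx K) + w.1) (comb (@cy K) + w.2) (comb (@c0 K) + k).

Definition in_pencil (c : conic) : Prop := exists a b k, c = frame_conic a b 0 0 k.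

Definition cpolar (c : conic) : K := alpha Q * cxx c + beta Q * cxy c + gamma Q * cyy c.

Lemma cderiv_frame a b r w k x d : cderiv (frame_conic a b r w k) x d =
  a * dprod A A' x d + b * dprod B B' x d + r * dprod A B x d + dot w d.
Proof. by rewrite /cderiv /frame_conic /dprod /lform /llin /dot /=; ring. Qed.

Lemma cquad_frame a b r w k d : cquad (frame_conic a b r w k) d =
  a * (llin A d * llin A' d) + b * (llin B d * llin B' d) + r * (llin A d * llin B d).
Proof. by rewrite /cquad /frame_conic /llin /=; ring. Qed.

Lemma cpolar_lprod (l1 l2 : line) : cpolar (lprod l1 l2) = qform Q (ldir l1) (ldir l2).
Proof. by rewrite /cpolar /qform /=; ring. Qed.

Lemma cpolar_frame a b r w k :
  cpolar (frame_conic a b r w k) = r * qform Q (ldir A) (ldir B).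
Proof. by rewrite /cpolar /frame_conic /qform; case: Q => A0 B0 A0' B0' /=; ring. Qed.

Lemma qform_sides :
  qform Q (ldir A) (ldir B) = llin A' (ldir B) * llin B' (ldir A) * llin A (ldir B).
Proof. by rewrite /qform /llin; case: Q => A0 B0 A0' B0' /=; ring. Qed.

Hypothesis quadQ : is_quad Q.

(* [lform A] vanishes on [ldir A] and [lform B] on [ldir B], so the quadratic part of [c] at
   [ldir A], [ldir B] and [ldir A + ldir B] gives [b], [a] and [r] in turn. *)
Lemma frame_conic_surj (c : conic) : exists a b r w k, c = frame_conic a b r w k.
Proof.
have [nAB _ _ nB'A] := quad_npar quadQ; have [nBA nA'B _ _] := quad_npar_sym quadQ.
move: (nAB) (nB'A) (nBA) (nA'B); rewrite !parallelNE => gAB gB'A gBA gA'B.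
pose a := cquad c (ldir B) / (llin A (ldir B) * llin A' (ldir B)).
pose b := cquad c (ldir A) / (llin B (ldir A) * llin B' (ldir A)).
pose r := (cquad c (ldir A + ldir B) - a * (llin A (ldir B) * llin A' (ldir A + ldir B))
           - b * (llin B (ldir A) * llin B' (ldir A + ldir B)))
          / (llin A (ldir B) * llin B (ldir A)).
pose F := frame_conic a b r 0 0.
have [exx exy eyy] : [/\ cxx c = cxx F, cxy c = cxy F & cyy c = cyy F].
  apply: (cquad_eq (npar_det nAB));
    rewrite cquad_frame ?(llinD A) ?(llinD B) !llin_dir ?add0r ?addr0 /r /a /b;
    by field; rewrite ?gAB ?gB'A ?gBA ?gA'B.
exists a, b, r, (cx c - cx F, cy c - cy F), (c0 c - c0 F).
by apply: conic_ext; rewrite ?exx ?exy ?eyy //= /F /=; ring.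
Qed.

Lemma cderiv_frame_bisects a b r w k l x : bisects_with_mid Q l (Some x) ->
  cderiv (frame_conic a b r w k) x (ldir l) = r * dprod A B x (ldir l) + dot w (ldir l).
Proof.
by case/(bisects_SomeE two_neq0 quadQ) => _ xA xB; rewrite cderiv_frame xA xB; ring.
Qed.

Lemma in_pencil_cderiv c l x : in_pencil c -> bisects_with_mid Q l (Some x) ->
  cderiv c x (ldir l) = 0.
Proof.
by case=> a [b [k ->]] /cderiv_frame_bisects->; rewrite /dot /=; ring.
Qed.

(* Write [c] in the frame; the bisecting sides kill the linear part, and then the sides
   [A'] and [B'] force [r = 0], since otherwise the vertex [A' B'] would lie on [A] and [B]. *)
Lemma cderiv_in_pencil c :
  (forall l x, bisects_with_mid Q l (Some x) -> cderiv c x (ldir l) = 0) -> in_pencil c.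
Proof.
move=> crit; have [a [b [r [w [k def_c]]]]] := frame_conic_surj c.
have side l x :
    bisects_with_mid Q l (Some x) -> r * dprod A B x (ldir l) + dot w (ldir l) = 0.
  by move=> blx; rewrite -(cderiv_frame_bisects a b r w k blx) -def_c crit.
have [nAB nBA' nA'B' nB'A] := quad_npar quadQ; have [_ _ _ nAB'] := quad_npar_sym quadQ.
have [bA bB bA' bB'] := bisects_sides two_neq0 quadQ.
have w0 : w = 0.
  apply: (dot_dir_eq0 nAB).
  - have [onA _ _] := (bisects_SomeE two_neq0 quadQ _ _).1 bA.
    by have := side _ _ bA; rewrite dprod_on_line // mulr0 add0r.
  - have [onB _ _] := (bisects_SomeE two_neq0 quadQ _ _).1 bB.
    by have := side _ _ bB; rewrite dprodC dprod_on_line // mulr0 add0r.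
have {}side l x : bisects_with_mid Q l (Some x) -> r * dprod A B x (ldir l) = 0.
  by move/side; rewrite w0 dot0l addr0.
have [BP2 A'P2] := meet_on_lines nBA'; have [A'P3 B'P3] := meet_on_lines nA'B'.
have [B'P4 AP4] := meet_on_lines nB'A.
have r0 : r = 0.
  apply/eqP/negP => /negP r_neq0; case: quadQ => _ []; exists (meet A' B'); split=> //.
  - have := side _ _ bA'.
    rewrite /midA' (dprod_midpt_vertex two_neq0 A A'P2 A'P3 BP2) => /eqP.
    by rewrite parallelNE in nBA'; rewrite !mulf_eq0 (negPf r_neq0) (negPf nBA') => /eqP.
  - have := side _ _ bB'; rewrite /midB' midptC dprodC.
    rewrite (dprod_midpt_vertex two_neq0 B B'P4 B'P3 AP4) => /eqP.
    by rewrite parallelNE in nAB'; rewrite !mulf_eq0 (negPf r_neq0) (negPf nAB') => /eqP.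
by exists a, b, k; rewrite def_c w0 r0.
Qed.

Lemma in_pencilE c : in_pencil c <->
  forall l x, bisects_with_mid Q l (Some x) -> cderiv c x (ldir l) = 0.
Proof.
by split=> [c_pencil l x|]; [exact: in_pencil_cderiv | exact: cderiv_in_pencil].
Qed.

Lemma qform_sides_neq0 : qform Q (ldir A) (ldir B) != 0.
Proof.
have [nAB _ _ nB'A] := quad_npar quadQ; have [nBA nA'B _ _] := quad_npar_sym quadQ.
by rewrite qform_sides !mulf_neq0 // -parallelNE.
Qed.

Lemma Q_pair_in_pencil (l1 l2 : line) : Q_pair Q l1 l2 -> in_pencil (lprod l1 l2).
Proof.
case=> m1 [m2 [bm1 bm2 mid_eq orth]].
have [a [b [r [w [k def_c]]]]] := frame_conic_surj (lprod l1 l2).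
have r0 : r = 0.
  move: (cpolar_frame a b r w k); rewrite -def_c cpolar_lprod [qform _ _ _]orth.
  by move/esym/eqP; rewrite mulf_eq0 (negPf qform_sides_neq0) orbF => /eqP.
have crit X m : bisects_with_mid Q X (Some m) -> dprod l1 l2 m (ldir X) = dot w (ldir X).
  by move=> bXm; rewrite -cderiv_lprod def_c cderiv_frame_bisects // r0 mul0r add0r.
have [l1m1 _ _] := (bisects_SomeE two_neq0 quadQ _ _).1 bm1.
have [l2m2 _ _] := (bisects_SomeE two_neq0 quadQ _ _).1 bm2.
have wl1 : dot w (ldir l1) = 0 by rewrite -(crit _ _ bm1) dprod_on_line.
have wl2 : dot w (ldir l2) = 0 by rewrite -(crit _ _ bm2) dprodC dprod_on_line.
have w0 : w = 0.
  case/boolP: (parallel l1 l2) => p12; last exact: dot_dir_eq0 p12 wl1 wl2.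
  have [cA cB] := centroid_midpts two_neq0 quadQ.
  have [bA bB bA' bB'] := bisects_sides two_neq0 quadQ.
  case/orP: (quad_opposite_npar quadQ l1) => /andP[n n'].
  - apply: (parallel_pair_dot_eq0 two_neq0 p12 n n' l1m1 l2m2 _ wl1
      (crit _ _ bA) (crit _ _ bA')); by rewrite cA.
  - apply: (parallel_pair_dot_eq0 two_neq0 p12 n n' l1m1 l2m2 _ wl1
      (crit _ _ bB) (crit _ _ bB')); by rewrite cB.
by exists a, b, k; rewrite def_c r0 w0.
Qed.

Lemma pencil_dprodE (l1 l2 : line) a b k : lprod l1 l2 = frame_conic a b 0 0 k ->
  forall x d, dprod l1 l2 x d = a * dprod A A' x d + b * dprod B B' x d.
Proof. by move=> def_c x d; rewrite -cderiv_lprod def_c cderiv_frame mul0r dot0l !addr0. Qed.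

Lemma pencil_llinE (l1 l2 : line) a b k : lprod l1 l2 = frame_conic a b 0 0 k ->
  forall d, llin l1 d * llin l2 d = a * (llin A d * llin A' d) + b * (llin B d * llin B' d).
Proof. by move=> def_c d; rewrite -cquad_lprod def_c cquad_frame mul0r addr0. Qed.

Lemma pencil_coef_neq0 (l1 l2 : line) a b k : lprod l1 l2 = frame_conic a b 0 0 k ->
  (a != 0) || (b != 0).
Proof.
move=> def_c; rewrite -negb_and; apply/negP => /andP[/eqP a0 /eqP b0].
apply: (@lprod_quad_neq0 _ l1 l2).
by rewrite def_c a0 b0 /frame_conic /=; split; ring.
Qed.

Lemma pencil_line_bisects (l : line) a b : (a != 0) || (b != 0) ->
  (forall x, on_line l x -> a * dprod A A' x (ldir l) + b * dprod B B' x (ldir l) = 0) ->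
  exists x, bisects_with_mid Q l (Some x).
Proof.
move=> ab crit; case/orP: (quad_opposite_npar quadQ l) => /andP[nl nl'].
- have [x [lx xA xB]] := dprod_common_root two_neq0 nl nl' ab crit.
  by exists x; apply/bisects_SomeE.
- have ba : (b != 0) || (a != 0) by rewrite orbC.
  have [x [lx xB xA]] := dprod_common_root two_neq0 nl nl' ba
    (fun x lx => etrans (addrC _ _) (crit x lx)).
  by exists x; apply/bisects_SomeE.
Qed.

Lemma pencil_sides_npar (l1 l2 : line) a b k : lprod l1 l2 = frame_conic a b 0 0 k ->
  [&& ~~ parallel l1 A, ~~ parallel l1 A', ~~ parallel l2 A & ~~ parallel l2 A'] ||
  [&& ~~ parallel l1 B, ~~ parallel l1 B', ~~ parallel l2 B & ~~ parallel l2 B'].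
Proof.
move=> def_c; have quadE := pencil_llinE def_c; have ab := pencil_coef_neq0 def_c.
have [nAB nBA' nA'B' nB'A] := quad_npar quadQ.
have [nBA nA'B nB'A' nAB'] := quad_npar_sym quadQ.
rewrite !parallelNE in nAB nBA' nA'B' nB'A nBA nA'B nB'A' nAB'.
have b0_A : parallel l1 A || parallel l2 A -> b = 0.
  by apply: quad_comb_parallel quadE _ (mulf_neq0 nBA nB'A); rewrite llin_dir mul0r.
have b0_A' : parallel l1 A' || parallel l2 A' -> b = 0.
  by apply: quad_comb_parallel quadE _ (mulf_neq0 nBA' nB'A'); rewrite llin_dir mulr0.
have quadE' d : llin l1 d * llin l2 d
    = b * (llin B d * llin B' d) + a * (llin A d * llin A' d) by rewrite addrC.
have a0_B : parallel l1 B || parallel l2 B -> a = 0.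
  by apply: quad_comb_parallel quadE' _ (mulf_neq0 nAB nA'B); rewrite llin_dir mul0r.
have a0_B' : parallel l1 B' || parallel l2 B' -> a = 0.
  by apply: quad_comb_parallel quadE' _ (mulf_neq0 nAB' nA'B'); rewrite llin_dir mulr0.
case: (boolP [&& _, _, _ & _]) => //= nparA.
have : (parallel l1 A || parallel l2 A) || (parallel l1 A' || parallel l2 A').
  by move: nparA; case: (parallel l1 A); case: (parallel l1 A'); case: (parallel l2 A);
    case: (parallel l2 A').
case/orP=> [/b0_A | /b0_A'] b0; move: ab; rewrite b0 eqxx orbF => a_neq0.
all: by apply/and4P; split; apply: contra a_neq0 => p; apply/eqP;
  [apply: a0_B | apply: a0_B' | apply: a0_B | apply: a0_B']; rewrite p ?orbT.
Qed.

Lemma pencil_midpts_centroid (l1 l2 : line) a b k x1 x2 :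
  lprod l1 l2 = frame_conic a b 0 0 k ->
  bisects_with_mid Q l1 (Some x1) -> bisects_with_mid Q l2 (Some x2) ->
  midpt x1 x2 = centroid Q.
Proof.
move=> def_c /(bisects_SomeE two_neq0 quadQ) [l1x1 x1A x1B].
move=> /(bisects_SomeE two_neq0 quadQ) [l2x2 x2A x2B].
have side X m : bisects_with_mid Q X (Some m) -> on_line X m /\ dprod l1 l2 m (ldir X) = 0.
  case/(bisects_SomeE two_neq0 quadQ) => Xm mA mB.
  by rewrite (pencil_dprodE def_c) mA mB !mulr0 addr0.
have [cA cB] := centroid_midpts two_neq0 quadQ.
have [/side[onA A0] /side[onB B0] /side[onA' A'0] /side[onB' B'0]] :=
  bisects_sides two_neq0 quadQ.
case/orP: (pencil_sides_npar def_c) => /and4P[n1 n1' n2 n2'].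
- by rewrite -cA; apply: (critical_midpts_eq two_neq0 n1 n1' n2 n2').
- by rewrite -cB; apply: (critical_midpts_eq two_neq0 n1 n1' n2 n2').
Qed.

Lemma in_pencil_Q_pair (l1 l2 : line) : in_pencil (lprod l1 l2) -> Q_pair Q l1 l2.
Proof.
case=> a [b [k def_c]].
have crit l : (forall x, on_line l x -> dprod l1 l2 x (ldir l) = 0) ->
    exists x, bisects_with_mid Q l (Some x).
  move=> l0; apply: (pencil_line_bisects (pencil_coef_neq0 def_c)) => x lx.
  by rewrite -(pencil_dprodE def_c) l0.
have [x1 b1] := crit l1 (fun x l1x => dprod_on_line _ l1x).
have [x2 b2] := crit l2 (fun x l2x => etrans (dprodC _ _ _ _) (dprod_on_line _ l2x)).
exists x1, x2; split=> //; first exact: pencil_midpts_centroid def_c b1 b2.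
by rewrite /Q_orthogonal -[qform _ _ _]/(qform Q (ldir l1) (ldir l2)) -cpolar_lprod
  def_c cpolar_frame mul0r.
Qed.

Lemma Q_pairE (l1 l2 : line) : Q_pair Q l1 l2 <-> in_pencil (lprod l1 l2).
Proof. by split; [exact: Q_pair_in_pencil | exact: in_pencil_Q_pair]. Qed.

Lemma Q_pair_opposite_sides : Q_pair Q A A' /\ Q_pair Q B B'.
Proof.
by split; apply/Q_pairE; [exists 1, 0, 0 | exists 0, 1, 0];
  apply: conic_ext; rewrite /frame_conic /=; ring.
Qed.

End Pencil.

Lemma bisects_of_Q_pairs (K : fieldType) (two_neq0 : (2%:R : K) != 0) (Q1 Q2 : quad K) :
  is_quad Q1 -> is_quad Q2 ->
  Q_pair Q1 (qA Q2) (qA' Q2) -> Q_pair Q1 (qB Q2) (qB' Q2) ->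
  forall l m, bisects_with_mid Q1 l m -> bisects_with_mid Q2 l m.
Proof.
move=> quad1 quad2 pairA pairB l [x|/(bisects_None quad1)//] blx.
have crit1 S S' : Q_pair Q1 S S' -> dprod S S' x (ldir l) = 0.
  by move/(Q_pairE two_neq0 quad1)/in_pencil_cderiv => /(_ two_neq0 quad1 _ _ blx);
    rewrite cderiv_lprod.
have [lx _ _] := (bisects_SomeE two_neq0 quad1 _ _).1 blx.
by apply/(bisects_SomeE two_neq0 quad2); split; [| exact: crit1 | exact: crit1].
Qed.

Lemma Q_pair_of_bisects (K : fieldType) (two_neq0 : (2%:R : K) != 0) (Q1 Q2 : quad K) :
  is_quad Q1 -> is_quad Q2 ->
  (forall l x, bisects_with_mid Q2 l (Some x) -> bisects_with_mid Q1 l (Some x)) ->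
  forall l1 l2, Q_pair Q1 l1 l2 -> Q_pair Q2 l1 l2.
Proof.
move=> quad1 quad2 bisects21 l1 l2.
move=> /(Q_pairE two_neq0 quad1)/(in_pencilE two_neq0 quad1) crit.
by apply/(Q_pairE two_neq0 quad2)/(in_pencilE two_neq0 quad2) => l x /bisects21/crit.
Qed.

Theorem corollary6p10 (K : fieldType) (char_not_2 : (2%:R : K) != 0)
    (Q1 Q2 : quad K) :
  is_quad Q1 -> is_quad Q2 ->
  ((forall (l : line K) (m : option (point K)),
       bisects_with_mid Q1 l m <-> bisects_with_mid Q2 l m)
   <->
   (forall l1 l2 : line K, bisector_field Q1 l1 l2 <-> bisector_field Q2 l1 l2)).
Proof.
move=> quad1 quad2; split=> same.
  by move=> l1 l2; split; apply: Q_pair_of_bisects => // l x /same.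
have [pairA1 pairB1] := Q_pair_opposite_sides char_not_2 quad1.
have [pairA2 pairB2] := Q_pair_opposite_sides char_not_2 quad2.
by move=> l m; split; apply: bisects_of_Q_pairs => //; apply/same.
Qed.
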